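(* Let $H$ be a Kekul\'ean hexagonal system. For every integer $n\ge0$, the map $f$ is a bijection from the set of Clar covers of $H$ with exactly $n$ hexagons onto the set of induced subgraphs of $R(H)$ isomorphic to the $n$-cube $Q_n$.
   Context: A hexagonal system is a 2-connected finite plane graph in which every interior face is a regular hexagon of side length one; its hexagons are the boundaries of its interior faces; it is Kekul\'ean if it has a perfect matching. A Clar cover of $H$ is a spanning subgraph each of whose components is a hexagon of $H$ or a single edge. The resonance graph $R(H)$ has the perfect matchings of $H$ as vertices, two adjacent iff their symmetric difference is the edge set of a hexagon of $H$. For a Clar cover $C$, $f(C)$ denotes the subgraph of $R(H)$ induced by all perfect matchings $M$ of $H$ such that every hexagon component of $C$ is $M$-alternating and every single-edge component of $C$ belongs to $M$. *)

From HB Require Import structures.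
From mathcomp Require Import all_boot all_order all_algebra.
From mathcomp Require Import finmap.
Set Implicit Arguments. Unset Strict Implicit. Unset Printing Implicit Defensive.
Import Order.TTheory GRing.Theory Num.Theory.
Local Open Scope fset_scope.

(* Vertices: ((x,y), true) is the black vertex b(x,y), ((x,y), false) the
   white vertex w(x,y).
   Edges: ((x,y), d) is the edge joining b(x,y) to
     w(x,y)   if d = 0,  w(x-1,y) if d = 1,  w(x,y-1) if d = 2.
   Every lattice edge has exactly one such name.
   Hexagonal cells: the cell (i,j) is the 6-cycle
     b(i,j) - w(i,j) - b(i+1,j) - w(i+1,j-1) - b(i+1,j-1) - w(i,j-1) - b(i,j).
   These 6-cycles are exactly the faces of the honeycomb (unit regular
   hexagons in the usual drawing). *)
Definition cell := (int * int)%type.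
Definition vertex := ((int * int) * bool)%type.
Definition edge := ((int * int) * 'I_3)%type.

Definition bl (x y : int) : vertex := ((x, y), true).
Definition wh (x y : int) : vertex := ((x, y), false).

Definition edge_black (e : edge) : vertex := bl e.1.1 e.1.2.
Definition edge_white (e : edge) : vertex :=
  let: ((x, y), d) := e in
  if val d == 0%N then wh x y
  else if val d == 1%N then wh (x - 1)%R y
  else wh x (y - 1)%R.

Definition incident (v : vertex) (e : edge) : Prop :=
  v = edge_black e \/ v = edge_white e.

Definition mke (x y : int) (d : nat) : edge := ((x, y), inord d).

(* the six edges of cell (i,j), in cyclic order *)
Definition hex_edge_seq (c : cell) : seq edge :=
  let: (i, j) := c in
  [:: mke i j 0; mke (i + 1)%R j 1; mke (i + 1)%R j 2;
      mke (i + 1)%R (j - 1)%R 0; mke (i + 1)%R (j - 1)%R 1; mke i j 2].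

Definition hex_edges (c : cell) : {fset edge} := [fset e | e in hex_edge_seq c].

Definition hex_verts (c : cell) : seq vertex :=
  let: (i, j) := c in
  [:: bl i j; wh i j; bl (i + 1)%R j; wh (i + 1)%R (j - 1)%R;
      bl (i + 1)%R (j - 1)%R; wh i (j - 1)%R].

(* two cells share an edge *)
Definition cell_adj (c d : cell) : Prop :=
  let: (a, b) := c in
  d \in [:: ((a + 1)%R, b); ((a - 1)%R, b); (a, (b + 1)%R); (a, (b - 1)%R);
           ((a + 1)%R, (b - 1)%R); ((a - 1)%R, (b + 1)%R)].

Fixpoint walk (T : Type) (R : T -> T -> Prop) (x : T) (p : seq T) : Prop :=
  match p with
  | [::] => True
  | y :: q => R x y /\ walk R y q
  end.

Section Graph.
Variable S : {fset cell}.

Definition edge_of (e : edge) : Prop := exists2 c, c \in S & e \in hex_edges c.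
Definition vertex_of (v : vertex) : Prop := exists2 c, c \in S & v \in hex_verts c.

Definition adjH (u v : vertex) : Prop :=
  exists2 e, edge_of e &
    ((u = edge_black e /\ v = edge_white e) \/ (v = edge_black e /\ u = edge_white e)).

Definition joined_avoiding (z : vertex) (u v : vertex) : Prop :=
  exists p : seq vertex, walk adjH u p /\ last u p = v /\ (forall w, w \in u :: p -> w <> z).

Definition connectedH : Prop :=
  forall u v, vertex_of u -> vertex_of v ->
    exists p : seq vertex, walk adjH u p /\ last u p = v.

Definition two_connected : Prop :=
  connectedH /\
  (exists u v w, [/\ vertex_of u, vertex_of v, vertex_of w & [/\ u <> v, v <> w & u <> w]]) /\
  (forall z u v, vertex_of z -> vertex_of u -> vertex_of v -> u <> z -> v <> z ->
     joined_avoiding z u v).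

(* no holes: every cell outside S is joined, through cells outside S, to a
   cell lying strictly to the right of all cells of S (i.e. it lies in the
   unbounded face); hence the interior faces of H are exactly the cells of S *)
Definition hole_free : Prop :=
  forall c, c \notin S ->
    exists p : seq cell, [/\ walk cell_adj c p, (forall d, d \in p -> d \notin S) &
                             (forall d, d \in S -> (d.1 < (last c p).1)%R)].

Definition hexagonal_system : Prop := S != fset0 /\ two_connected /\ hole_free.

Definition perfect_matching (M : {fset edge}) : Prop :=
  (forall e, e \in M -> edge_of e) /\
  (forall v, vertex_of v -> exists! e, e \in M /\ incident v e).

Definition kekulean : Prop := exists M, perfect_matching M.

Definition alternating (M : {fset edge}) (c : cell) : Prop :=
  exists2 k, (k < 2)%N &
    forall i, (i < 6)%N -> ((nth (mke 0 0 0) (hex_edge_seq c) i \in M) <-> odd (i + k)).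

Definition res_adj (M M' : {fset edge}) : Prop :=
  exists2 c, c \in S & (M `\` M') `|` (M' `\` M) = hex_edges c.

(* Clar covers, given by the set of hexagon components and the set of
   single-edge components: the components are pairwise vertex-disjoint and
   together cover all vertices of H (spanning subgraph). *)
Definition clar_cover (C : {fset cell} * {fset edge}) : Prop :=
  (forall c, c \in C.1 -> c \in S) /\
  (forall e, e \in C.2 -> edge_of e) /\
  (forall v, vertex_of v ->
     ((exists! c, c \in C.1 /\ v \in hex_verts c) /\ (forall e, e \in C.2 -> ~ incident v e))
     \/
     ((forall c, c \in C.1 -> v \notin hex_verts c) /\ (exists! e, e \in C.2 /\ incident v e))).

(* vertex set of the induced subgraph f(C) of R(H) *)
Definition fC (C : {fset cell} * {fset edge}) (M : {fset edge}) : Prop :=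
  [/\ perfect_matching M, (forall c, c \in C.1 -> alternating M c)
    & (forall e, e \in C.2 -> e \in M)].

(* the subgraph of R(H) induced by the vertex set X is isomorphic to Q_n
   (vertices of Q_n: subsets of 'I_n, adjacent iff they differ in one element) *)
Definition induces_cube (n : nat) (X : {fset edge} -> Prop) : Prop :=
  (forall M, X M -> perfect_matching M) /\
  exists phi : {fset edge} -> {set 'I_n},
    [/\ (forall M M', X M -> X M' -> phi M = phi M' -> M = M'),
        (forall A, exists2 M, X M & phi M = A) &
        (forall M M', X M -> X M' ->
           (res_adj M M' <-> #|((phi M :\: phi M') :|: (phi M' :\: phi M))%SET| = 1%N))].

End Graph.

From HB Require Import structures.
From mathcomp Require Import all_boot all_order all_algebra.
From mathcomp Require Import finmap.
From mathcomp Require Import zify.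
From Stdlib Require Import IndefiniteDescription.

(* For a Clar cover C, a perfect matching in f(C) is the set of single edges of C together
   with one of the two perfect matchings of each hexagon of C, chosen independently; two of
   them are adjacent in R(H) iff the choices differ at exactly one hexagon.  So f(C) is a cube
   with one coordinate per hexagon, and C is recovered from f(C): its hexagons are the labels
   of the edges of f(C), and its single edges are the edges common to all matchings of f(C).
   Conversely, in an induced cube of R(H) opposite sides of every square carry the same
   hexagon, because in the honeycomb a family of cells covering every edge an even number of
   times has even multiplicities.  Hence all moves in direction i flip a single hexagon c_i;
   these are pairwise disjoint, and with the edges of the bottom matching off them they form
   a Clar cover whose image is the cube. *)

Set Implicit Arguments. Unset Strict Implicit. Unset Printing Implicit Defensive.
Import GRing.Theory.
Local Open Scope fset_scope.

(** * Cells, edges and vertices of the honeycomb *)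

Lemma inord3_0 : (inord 0 : 'I_3) = Ordinal (isT : (0 < 3)%N).
Proof. by apply: val_inj; rewrite /= inordK. Qed.

Lemma inord3_1 : (inord 1 : 'I_3) = Ordinal (isT : (1 < 3)%N).
Proof. by apply: val_inj; rewrite /= inordK. Qed.

Lemma inord3_2 : (inord 2 : 'I_3) = Ordinal (isT : (2 < 3)%N).
Proof. by apply: val_inj; rewrite /= inordK. Qed.

Ltac unfold_mke := rewrite /mke ?inord3_0 ?inord3_1 ?inord3_2 /=.

Lemma eq_Ordinal n a b (p : (a < n)%N) (q : (b < n)%N) :
  (Ordinal p == Ordinal q) = (a == b).
Proof. by []. Qed.

Lemma edge_ind (P : edge -> Prop) :
  (forall x y, P (mke x y 0)) -> (forall x y, P (mke x y 1)) ->
  (forall x y, P (mke x y 2)) -> forall e, P e.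
Proof.
move=> P0 P1 P2 [[x y] [[|[|[|d]]] Hd]] //.
- have -> : Ordinal Hd = inord 0 by apply: val_inj; rewrite /= inordK.
  exact: P0.
- have -> : Ordinal Hd = inord 1 by apply: val_inj; rewrite /= inordK.
  exact: P1.
- have -> : Ordinal Hd = inord 2 by apply: val_inj; rewrite /= inordK.
  exact: P2.
Qed.

(* The two cells on either side of an edge. *)
Definition edge_cell1 (e : edge) : cell :=
  let: ((x, y), d) := e in if val d == 0%N then (x, y) else ((x - 1)%R, y).
Definition edge_cell2 (e : edge) : cell :=
  let: ((x, y), d) := e in if val d == 2%N then (x, y) else ((x - 1)%R, (y + 1)%R).

Lemma mem_hex_edges e c :
  (e \in hex_edges c) = (c == edge_cell1 e) || (c == edge_cell2 e).
Proof.
case: c => i j; elim/edge_ind: e => x y; rewrite /hex_edges /hex_edge_seq !inE;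
  unfold_mke; rewrite !xpair_eqE !eq_Ordinal /=; lia.
Qed.

Lemma hex_edges_meet_uniq c d e f : c != d ->
  e \in hex_edges c -> e \in hex_edges d ->
  f \in hex_edges c -> f \in hex_edges d -> e = f.
Proof.
rewrite !mem_hex_edges; case: c => c1 c2; case: d => d1 d2.
elim/edge_ind: e => x y; elim/edge_ind: f => x' y'; unfold_mke;
  rewrite !xpair_eqE /= => ? ? ? ? ?; apply/eqP; rewrite !xpair_eqE ?eq_Ordinal /=; lia.
Qed.

Definition incidentb (v : vertex) (e : edge) : bool :=
  (v == edge_black e) || (v == edge_white e).

Lemma incidentE v e : incident v e <-> incidentb v e.
Proof.
split; first by case=> ->; rewrite /incidentb eqxx ?orbT.
by case/orP => /eqP ->; [left | right].
Qed.

Lemma incident_hex_verts v e c :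
  incident v e -> e \in hex_edges c -> v \in hex_verts c.
Proof.
rewrite incidentE mem_hex_edges; case: c => i j.
elim/edge_ind: e => x y; rewrite /incidentb /edge_black /edge_white /hex_verts;
  unfold_mke; case: v => [[a b] []];
  rewrite !inE !xpair_eqE /= ?andbT ?andbF ?orbF; lia.
Qed.

Definition hex_edge (c : cell) k : edge := nth (mke 0 0 0) (hex_edge_seq c) k.
Definition hex_vert (c : cell) k : vertex := nth (bl 0 0) (hex_verts c) k.

Definition hex_half (c : cell) (b : bool) : {fset edge} :=
  if b then [fset hex_edge c 0; hex_edge c 2; hex_edge c 4]
  else [fset hex_edge c 1; hex_edge c 3; hex_edge c 5].

Lemma hex_edge_mem c k : (k < 6)%N -> hex_edge c k \in hex_edges c.
Proof.
by case: c => i j; case: k => [|[|[|[|[|[|k]]]]]]; rewrite // /hex_edge /= !inE eqxx ?orbT.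
Qed.

Lemma hex_edgesP c e : e \in hex_edges c -> exists2 k, (k < 6)%N & e = hex_edge c k.
Proof.
rewrite /hex_edges inE /= => ec; exists (index e (hex_edge_seq c)).
  by case: c ec => i j ec; rewrite -[6%N]/(size (hex_edge_seq (i, j))) index_mem.
by rewrite /hex_edge nth_index.
Qed.

Lemma hex_edge_eq c k l : (k < 6)%N -> (l < 6)%N ->
  (hex_edge c k == hex_edge c l) = (k == l).
Proof.
case: c => i j; case: k => [|[|[|[|[|[|k]]]]]] //= _; case: l => [|[|[|[|[|[|l]]]]]] //= _;
  rewrite /hex_edge /=; unfold_mke; rewrite !xpair_eqE ?eq_Ordinal /=; lia.
Qed.

Lemma hex_edge_half c m b : (m < 6)%N ->
  (hex_edge c m \in hex_half c b) = (b == ~~ odd m).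
Proof.
move=> Hm; rewrite /hex_half; case: b; rewrite !inE !hex_edge_eq //.
all: by move: Hm; case: m => [|[|[|[|[|[|m]]]]]].
Qed.

Lemma hex_half_sub c b : {subset hex_half c b <= hex_edges c}.
Proof.
move=> e eh; suff [k Hk ->] : exists2 k, (k < 6)%N & e = hex_edge c k by apply: hex_edge_mem.
by move: eh; case: b; rewrite !inE -!orbA => /or3P [] /eqP ->;
  [exists 0%N | exists 2%N | exists 4%N | exists 1%N | exists 3%N | exists 5%N].
Qed.

Lemma hex_vert_mem c k : (k < 6)%N -> hex_vert c k \in hex_verts c.
Proof.
by case: c => i j; case: k => [|[|[|[|[|[|k]]]]]]; rewrite // /hex_vert /= !inE eqxx ?orbT.
Qed.

Lemma hex_vertsP c v : v \in hex_verts c -> exists2 k, (k < 6)%N & v = hex_vert c k.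
Proof.
move=> vc; exists (index v (hex_verts c)); last by rewrite /hex_vert nth_index.
by case: c vc => i j vc; rewrite -[6%N]/(size (hex_verts (i, j))) index_mem.
Qed.

Lemma hex_vert_incident c k : (k < 6)%N ->
  incidentb (hex_vert c k) (hex_edge c k) &&
  incidentb (hex_vert c k) (hex_edge c ((k + 5) %% 6)).
Proof.
case: c => i j; case: k => [|[|[|[|[|[|k]]]]]] //= _;
  rewrite /hex_vert /hex_edge /incidentb /edge_black /edge_white /=; unfold_mke;
  rewrite !xpair_eqE /=; lia.
Qed.

Lemma hex_half_covers c b v : v \in hex_verts c ->
  exists2 e, e \in hex_half c b & incidentb v e.
Proof.
case/hex_vertsP => k Hk ->; have /andP [Ik Ik'] := hex_vert_incident c Hk.
have Hk' : ((k + 5) %% 6 < 6)%N by rewrite ltn_mod.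
have [Eb | Eb] := eqVneq b (~~ odd k).
  by exists (hex_edge c k); rewrite ?hex_edge_half ?Eb.
exists (hex_edge c ((k + 5) %% 6)) => //; rewrite hex_edge_half //.
by move: Eb Hk; clear; case: b; case: k => [|[|[|[|[|[|k]]]]]].
Qed.

Lemma hex_half_uniq c b v e f : e \in hex_half c b -> f \in hex_half c b ->
  incidentb v e -> incidentb v f -> e = f.
Proof.
case: c => i j; case: b; rewrite !inE -!orbA => /or3P [] /eqP -> /or3P [] /eqP -> //;
  rewrite /hex_edge /incidentb /edge_black /edge_white /=; unfold_mke;
  case: v => [[a b0] []]; rewrite !xpair_eqE /= ?andbF ?andbT ?orbF; lia.
Qed.

(** * Perfect matchings and alternating hexagons *)

Section SymmetricDifference.
Variable K : choiceType.

Definition symdiff (A B : {fset K}) : {fset K} := (A `\` B) `|` (B `\` A).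

Lemma in_symdiff A B x : (x \in symdiff A B) = (x \in A) (+) (x \in B).
Proof. by rewrite !inE; case: (x \in A); case: (x \in B). Qed.

Lemma symdiffC A B : symdiff A B = symdiff B A.
Proof. by apply/fsetP => x; rewrite !in_symdiff addbC. Qed.

Lemma symdiff_inj A B B' : symdiff A B = symdiff A B' -> B = B'.
Proof.
move/fsetP => E; apply/fsetP => x; have := E x; rewrite !in_symdiff.
by case: (x \in A); case: (x \in B); case: (x \in B').
Qed.

End SymmetricDifference.

Section Matchings.
Variable S : {fset cell}.

Lemma perfect_matching_uniq N v e f : perfect_matching S N -> vertex_of S v ->
  incident v e -> incident v f -> e \in N -> f \in N -> e = f.
Proof.
case=> _ PN vS ve vf eN fN; have [u [_ Hu]] := PN v vS.
by rewrite -(Hu e) ?(Hu f).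
Qed.

Lemma vertex_of_hex c v : c \in S -> v \in hex_verts c -> vertex_of S v.
Proof. by exists c. Qed.

Lemma vertex_of_edge_black e : edge_of S e -> vertex_of S (edge_black e).
Proof. by case=> c cS ec; exists c => //; apply: incident_hex_verts ec; left. Qed.

Definition alternates (N : {fset edge}) (c : cell) : Prop :=
  exists b, forall e, e \in hex_edges c -> (e \in N) = (e \in hex_half c b).

Lemma alternatingP N c : alternating N c <-> alternates N c.
Proof.
split.
- case=> k Hk HN; exists (k == 1%N) => _ /hex_edgesP [m Hm ->].
  rewrite hex_edge_half //; have := HN m Hm; rewrite -/(hex_edge c m).
  move: Hk; case: k {HN} => [|[|k]] //= _; rewrite ?addn0 ?addn1 /=;
  by case: (hex_edge c m \in N); case: (odd m) => -[H1 H2] //=;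
    [case: (H1 isT) | case: (H2 isT)].
- case=> b HN; exists (nat_of_bool b); first by case: b {HN}.
  move=> i Hi; rewrite -/(hex_edge c i) HN ?hex_edge_mem // hex_edge_half // oddD.
  by case: b {HN}; case: (odd i).
Qed.

(* A matching that differs from another one exactly on the hexagon c takes every
   other edge of c: consecutive edges of c share a vertex, and exactly one of
   them lies in each matching. *)
Lemma symdiff_hex_alternates N N' c :
  perfect_matching S N -> perfect_matching S N' -> c \in S ->
  symdiff N N' = hex_edges c -> alternates N c.
Proof.
move=> PN PN' cS NN'.
have flip k : (k < 6)%N -> (hex_edge c ((k + 5) %% 6) \in N) = ~~ (hex_edge c k \in N).
  move=> Hk; have /andP [I1 I2] := hex_vert_incident c Hk.
  have Hk' : ((k + 5) %% 6 < 6)%N by rewrite ltn_mod.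
  have vS : vertex_of S (hex_vert c k) by apply: vertex_of_hex cS (hex_vert_mem c Hk).
  have ne : hex_edge c k != hex_edge c ((k + 5) %% 6).
    by rewrite hex_edge_eq //; move: Hk; clear; case: k => [|[|[|[|[|[|k]]]]]].
  have inNN' l : (l < 6)%N -> (hex_edge c l \in N) (+) (hex_edge c l \in N').
    by move=> Hl; rewrite -in_symdiff NN' hex_edge_mem.
  move: (inNN' _ Hk) (inNN' _ Hk').
  case E1: (hex_edge c k \in N); case E2: (hex_edge c ((k + 5) %% 6) \in N) => //= F1 F2.
  + by case/eqP: ne; apply: (perfect_matching_uniq PN vS _ _ E1 E2); apply/incidentE.
  + by case/eqP: ne; apply: (perfect_matching_uniq PN' vS _ _ F1 F2); apply/incidentE.
exists (hex_edge c 0 \in N) => _ /hex_edgesP [m Hm ->]; rewrite hex_edge_half //.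
elim: m Hm => [|m IH] Hm; first by case: (hex_edge c 0 \in N).
have Em : (m.+1 + 5) %% 6 = m by rewrite addSnnS modnDr modn_small // ltnW.
have := flip m.+1 Hm; rewrite Em IH ?(ltnW Hm) //= .
by case: (hex_edge c m.+1 \in N); case: (hex_edge c 0 \in N); case: (odd m).
Qed.

End Matchings.

(* Which of its two perfect matchings [M] induces on the hexagon [c], if it alternates on [c]. *)
Definition hex_bit (M : {fset edge}) (c : cell) : bool := hex_edge c 0 \in M.

Lemma alternates_covers N c v : alternates N c -> v \in hex_verts c ->
  exists e, [/\ e \in N, e \in hex_edges c & incident v e].
Proof.
case=> b HN vc; have [e eh ve] := hex_half_covers b vc.
by exists e; rewrite HN ?(hex_half_sub eh) //; split => //; apply/incidentE.
Qed.

Lemma alternates_eq N N' c : alternates N c ->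
  (forall e, e \in hex_edges c -> (e \in N) = (e \in N')) -> alternates N' c.
Proof. by case=> b HN NN'; exists b => e ec; rewrite -NN' ?HN. Qed.

Lemma alternates_addb M M' c e : alternates M c -> alternates M' c -> e \in hex_edges c ->
  (e \in M) (+) (e \in M') = hex_bit M c (+) hex_bit M' c.
Proof.
case=> b HM [b' HM'] /hex_edgesP [m Hm ->]; rewrite /hex_bit.
rewrite HM ?HM' ?hex_edge_mem // [hex_edge c 0 \in M]HM ?[hex_edge c 0 \in M']HM' ?hex_edge_mem //.
by rewrite !hex_edge_half //=; case: b {HM}; case: b' {HM'}; case: (odd m).
Qed.

(** * Clar covers and their images under f *)

Section ClarCover.
Variables (S : {fset cell}) (C : {fset cell} * {fset edge}).
Hypothesis HC : clar_cover S C.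

Lemma clar_hex_uniq c d v : c \in C.1 -> d \in C.1 ->
  v \in hex_verts c -> v \in hex_verts d -> c = d.
Proof.
have [C1S [_ cover]] := HC => cC dC vc vd.
case: (cover v (vertex_of_hex (C1S _ cC) vc)) => [[[u [_ Hu]] _] | [notC _]].
  by rewrite -(Hu c) ?(Hu d).
by have := notC _ cC; rewrite vc.
Qed.

Lemma clar_single_not_incident c e v : c \in C.1 -> v \in hex_verts c ->
  e \in C.2 -> ~ incident v e.
Proof.
have [C1S [_ cover]] := HC => cC vc eC.
case: (cover v (vertex_of_hex (C1S _ cC) vc)) => [[_ H] | [notC _]]; first exact: H.
by have := notC _ cC; rewrite vc.
Qed.

Lemma clar_hex_edge_uniq c d e : c \in C.1 -> d \in C.1 ->
  e \in hex_edges c -> e \in hex_edges d -> c = d.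
Proof.
move=> cC dC ec ed; have ve : incident (edge_black e) e by left.
exact: clar_hex_uniq cC dC (incident_hex_verts ve ec) (incident_hex_verts ve ed).
Qed.

Lemma clar_single_notin_hex c e : c \in C.1 -> e \in C.2 -> e \notin hex_edges c.
Proof.
move=> cC eC; apply/negP => ec.
by apply: (clar_single_not_incident cC (incident_hex_verts (or_introl erefl) ec) eC); left.
Qed.

Lemma fC_single M e : fC S C M -> e \in M ->
  (forall d, d \in C.1 -> e \notin hex_edges d) -> e \in C.2.
Proof.
case=> PM altM C2M eM off.
have vS : vertex_of S (edge_black e) by apply: vertex_of_edge_black; exact: PM.1.
case: HC => _ [_ /(_ _ vS)] [[[d [[dC vd] _]] _] | [_ [f [[fC vf] _]]]].
- have [f [fM fd vf]] := alternates_covers (proj1 (alternatingP _ _) (altM d dC)) vd.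
  have ef : e = f by apply: (perfect_matching_uniq PM vS _ vf eM fM); left.
  by move: (off d dC); rewrite ef fd.
- suff -> : e = f by [].
  by apply: (perfect_matching_uniq PM vS _ vf eM (C2M _ fC)); left.
Qed.

Lemma fC_alternates M d : fC S C M -> d \in C.1 -> alternates M d.
Proof. by case=> _ altM _ dC; apply/alternatingP/altM. Qed.

Lemma fC_off_hexes M M' e : fC S C M -> fC S C M' ->
  (forall d, d \in C.1 -> e \notin hex_edges d) -> (e \in M) = (e \in M').
Proof.
move=> fM fM' off; have [_ _ C2M] := fM; have [_ _ C2M'] := fM'.
case eM: (e \in M); case eM': (e \in M') => //.
- by have := C2M' e (fC_single fM eM off); rewrite eM'.
- by have := C2M e (fC_single fM' eM' off); rewrite eM.
Qed.

Lemma fC_eq M M' : fC S C M -> fC S C M' -> {in C.1, hex_bit M =1 hex_bit M'} -> M = M'.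
Proof.
move=> fM fM' bitMM'; apply/fsetP => e.
have [/hasP [d dC ed] | /hasPn off] := boolP (has (fun d => e \in hex_edges d) C.1).
  have := alternates_addb (fC_alternates fM dC) (fC_alternates fM' dC) ed.
  by rewrite bitMM' // addbb; case: (e \in M); case: (e \in M').
exact: fC_off_hexes.
Qed.

Definition clar_matching (b : cell -> bool) : {fset edge} :=
  C.2 `|` \bigcup_(d <- C.1) hex_half d (b d).

Lemma clar_matchingP b e : e \in clar_matching b ->
  e \in C.2 \/ exists2 d, d \in C.1 & e \in hex_half d (b d).
Proof.
rewrite inE => /orP [eC | /bigfcupP [d /andP [dC _] ed]]; [by left | by right; exists d].
Qed.

Lemma clar_matching_hex b d e : d \in C.1 -> e \in hex_edges d ->
  (e \in clar_matching b) = (e \in hex_half d (b d)).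
Proof.
move=> dC ed; apply/idP/idP => [| eh]; last first.
  by rewrite inE; apply/orP; right; apply/bigfcupP; exists d; rewrite ?dC.
case/clar_matchingP => [eC | [d' d'C eh]].
  by have := clar_single_notin_hex dC eC; rewrite ed.
by rewrite (clar_hex_edge_uniq dC d'C ed (hex_half_sub eh)).
Qed.

Lemma clar_matching_hex_disjoint b b' d e : d \in C.1 -> b d != b' d ->
  e \in hex_edges d -> e \in clar_matching b -> e \notin clar_matching b'.
Proof.
move=> dC bb' ed; rewrite !(clar_matching_hex _ dC ed).
case/hex_edgesP: ed => m Hm ->; rewrite !hex_edge_half //.
by move: bb'; case: (b d); case: (b' d); case: (odd m).
Qed.

Lemma clar_matching_perfect b : perfect_matching S (clar_matching b).
Proof.
have [C1S [C2S cover]] := HC; split.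
  move=> e /clar_matchingP [eC | [d dC eh]]; first exact: C2S.
  by exists d; [exact: C1S | exact: hex_half_sub eh].
move=> v vS; case: (cover v vS) => [[[c [[cC vc] _]] notC2] | [notC1 [f [[fC vf] Hf]]]].
- have [e eh ve] := hex_half_covers (b c) vc.
  exists e; split.
    by rewrite (clar_matching_hex b cC (hex_half_sub eh)) eh; split => //; apply/incidentE.
  move=> f [/clar_matchingP [fC | [d dC fh]] vf]; first by case: (notC2 f fC).
  have cd : c = d by apply: clar_hex_uniq cC dC vc (incident_hex_verts vf (hex_half_sub fh)).
  by subst d; apply: (hex_half_uniq eh fh ve); apply/incidentE.
- exists f; split; first by split; rewrite // inE fC.
  move=> g [/clar_matchingP [gC | [d dC gh]] vg]; first exact: Hf.
  by have := notC1 d dC; rewrite (incident_hex_verts vg (hex_half_sub gh)).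
Qed.

Lemma clar_matching_fC b : fC S C (clar_matching b).
Proof.
split; [exact: clar_matching_perfect | move=> d dC | by move=> e eC; rewrite inE eC].
by apply/alternatingP; exists (b d) => e; apply: clar_matching_hex.
Qed.

Lemma hex_bit_clar_matching b : {in C.1, hex_bit (clar_matching b) =1 b}.
Proof.
move=> d dC; rewrite /hex_bit (clar_matching_hex b dC (hex_edge_mem d (isT : 0 < 6)%N)).
by rewrite hex_edge_half //=; case: (b d).
Qed.

Lemma fC_symdiff_hex M M' d : fC S C M -> fC S C M' -> d \in C.1 ->
  hex_bit M d != hex_bit M' d -> {in C.1, forall d', d' != d -> hex_bit M d' = hex_bit M' d'} ->
  symdiff M M' = hex_edges d.
Proof.
move=> fM fM' dC Md others; apply/fsetP => e; rewrite in_symdiff.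
have [/hasP [d' d'C ed'] | /hasPn off] := boolP (has (fun d => e \in hex_edges d) C.1).
  rewrite (alternates_addb (fC_alternates fM d'C) (fC_alternates fM' d'C)) //.
  have [Ed | ne] := eqVneq d' d.
    by subst d'; rewrite ed'; move: Md; case: hex_bit; case: hex_bit.
  rewrite others // addbb; apply/esym/negP => ed.
  by move/eqP: ne; apply; apply: clar_hex_edge_uniq d'C dC ed' ed.
by rewrite (fC_off_hexes fM fM' off) addbb; apply/esym/negP => ed; have := off d dC; rewrite ed.
Qed.

(* Conversely, two matchings of f(C) adjacent in R(H) differ exactly at one hexagon of C:
   a hexagon of C where they differ lies inside the hexagon of the move, and distinct
   hexagons share at most one edge. *)
Lemma fC_res_adj M M' d0 : fC S C M -> fC S C M' -> symdiff M M' = hex_edges d0 ->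
  [/\ d0 \in C.1, hex_bit M d0 != hex_bit M' d0 &
      {in C.1, forall d, d != d0 -> hex_bit M d = hex_bit M' d}].
Proof.
move=> fM fM' MM'.
have only_d0 d : d \in C.1 -> hex_bit M d != hex_bit M' d -> d = d0.
  move=> dC Md; have [// | dd0] := eqVneq d d0; exfalso.
  have sub k : (k < 6)%N -> hex_edge d k \in hex_edges d0.
    move=> Hk; rewrite -MM' in_symdiff.
    rewrite (alternates_addb (fC_alternates fM dC) (fC_alternates fM' dC)) ?hex_edge_mem //.
    by move: Md; case: hex_bit; case: hex_bit.
  have := hex_edges_meet_uniq dd0 (hex_edge_mem d (isT : 0 < 6)%N) (sub 0%N isT)
    (hex_edge_mem d (isT : 1 < 6)%N) (sub 1%N isT).
  by move/eqP; rewrite hex_edge_eq.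
have [d dC Md] : exists2 d, d \in C.1 & hex_bit M d != hex_bit M' d.
  apply/hasP; apply: contraT => /hasPn same.
  have MM'0 : M = M' by apply: fC_eq fM fM' _ => d dC; apply/eqP/negbNE/same.
  by have := hex_edge_mem d0 (isT : 0 < 6)%N; rewrite -MM' in_symdiff MM'0 addbb.
have dd0 := only_d0 d dC Md; subst d.
split => // d' d'C ne; apply/eqP; apply: contraNT ne => Md'.
by rewrite (only_d0 d' d'C Md').
Qed.

End ClarCover.

Section ClarCube.
Variables (S : {fset cell}) (C : {fset cell} * {fset edge}) (n : nat).
Hypotheses (HC : clar_cover S C) (C_card : #|` C.1| = n).

(* The hexagons of C, enumerated as the coordinates of the cube. *)
Definition clar_hex (i : 'I_n) : cell := nth (0, 0)%R C.1 i.

Lemma size_clar_hexes : size C.1 = n.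
Proof. exact: C_card. Qed.

Lemma clar_hex_mem i : clar_hex i \in C.1.
Proof. by apply: mem_nth; rewrite size_clar_hexes. Qed.

Lemma clar_hex_inj : injective clar_hex.
Proof.
move=> i j /eqP; rewrite /clar_hex nth_uniq ?size_clar_hexes ?fset_uniq //.
by move/eqP/val_inj.
Qed.

Lemma clar_hexP d : d \in C.1 -> exists i, d = clar_hex i.
Proof.
move=> dC; have Hi : (index d C.1 < n)%N by rewrite -size_clar_hexes index_mem.
by exists (Ordinal Hi); rewrite /clar_hex /= nth_index.
Qed.

Definition clar_coords (M : {fset edge}) : {set 'I_n} := [set i | hex_bit M (clar_hex i)].

Lemma clar_coords_inj M M' : fC S C M -> fC S C M' ->
  clar_coords M = clar_coords M' -> M = M'.
Proof.
move=> fM fM' /setP E; apply: (fC_eq HC fM fM') => d /clar_hexP [i ->].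
by have := E i; rewrite !inE.
Qed.

Lemma clar_coords_surj A : exists2 M, fC S C M & clar_coords M = A.
Proof.
pose b d := [exists i in A, clar_hex i == d].
exists (clar_matching C b); first exact: clar_matching_fC.
apply/setP => i; rewrite inE (hex_bit_clar_matching HC) ?clar_hex_mem //.
apply/existsP/idP => [[j /andP [jA /eqP /clar_hex_inj <-]] // | iA].
by exists i; rewrite iA eqxx.
Qed.

Lemma clar_coords_symdiff M M' :
  (clar_coords M :\: clar_coords M') :|: (clar_coords M' :\: clar_coords M) =
  [set i | hex_bit M (clar_hex i) != hex_bit M' (clar_hex i)].
Proof. by apply/setP => i; rewrite !inE; case: hex_bit; case: hex_bit. Qed.

Lemma clar_coords_adj M M' : fC S C M -> fC S C M' ->
  res_adj S M M' <->
  #|(clar_coords M :\: clar_coords M') :|: (clar_coords M' :\: clar_coords M)| = 1%N.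
Proof.
move=> fM fM'; rewrite clar_coords_symdiff; split.
  case=> d0 _ MM'; have [d0C Md0 others] := fC_res_adj HC fM fM' MM'.
  have [i0 Ed0] := clar_hexP d0C; subst d0.
  apply/eqP/cards1P; exists i0; apply/setP => i.
  rewrite !inE; have [-> // | ne] := eqVneq i i0.
  by rewrite others ?clar_hex_mem ?eqxx //; apply: contra ne => /eqP /clar_hex_inj ->.
move/eqP/cards1P => [i0 Ei0].
have : i0 \in [set i0] by rewrite inE.
rewrite -Ei0 inE => Mi0; exists (clar_hex i0); first exact: (proj1 HC) _ (clar_hex_mem i0).
have others : {in C.1, forall d, d != clar_hex i0 -> hex_bit M d = hex_bit M' d}.
  move=> d /clar_hexP [i ->] ne; apply/eqP; apply: contraNT ne => Mi.
  have : i \in [set i0] by rewrite -Ei0 inE.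
  by rewrite inE => /eqP ->.
exact (fC_symdiff_hex HC fM fM' (clar_hex_mem i0) Mi0 others).
Qed.

Lemma fC_induces_cube : induces_cube S n (fC S C).
Proof.
split; first by move=> M [].
exists clar_coords; split; [exact: clar_coords_inj | exact: clar_coords_surj |].
exact: clar_coords_adj.
Qed.

End ClarCube.

(* Flipping only the hexagon d of C is an edge of f(C), hence of f(C'), labelled d. *)
Lemma clar_hexes_sub S C C' : clar_cover S C -> clar_cover S C' ->
  (forall M, fC S C M -> fC S C' M) -> {subset C.1 <= C'.1}.
Proof.
move=> HC HC' CC' d dC.
have fM := clar_matching_fC HC (fun _ => false).
have fM' := clar_matching_fC HC (fun d' => d' == d).
have flip_d : symdiff (clar_matching C (fun _ => false)) (clar_matching C (fun d' => d' == d))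
              = hex_edges d.
  apply: (fC_symdiff_hex HC fM fM' dC).
    by rewrite !(hex_bit_clar_matching HC) // eqxx.
  by move=> d' d'C ne; rewrite !(hex_bit_clar_matching HC) // (negbTE ne).
by have [] := fC_res_adj HC' (CC' _ fM) (CC' _ fM') flip_d.
Qed.

(* A single edge of C lies in both complementary matchings of f(C), hence off the hexagons of C'. *)
Lemma clar_singles_sub S C C' : clar_cover S C' ->
  (forall M, fC S C' M -> fC S C M) -> {subset C.2 <= C'.2}.
Proof.
move=> HC' C'C e eC.
have fM := clar_matching_fC HC' (fun _ => false).
have fM' := clar_matching_fC HC' (fun _ => true).
have [_ _ eM] := C'C _ fM; have [_ _ eM'] := C'C _ fM'.
have [/hasP [d dC ed] | /hasPn off] := boolP (has (fun d => e \in hex_edges d) C'.1).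
  by case/negP: (clar_matching_hex_disjoint HC' dC (isT : xpred0 d != xpredT d) ed (eM _ eC));
    apply: eM'.
by apply: (fC_single HC' fM (eM _ eC)) => d; apply: off.
Qed.

Lemma fC_inj S C C' : clar_cover S C -> clar_cover S C' ->
  (forall M, fC S C M <-> fC S C' M) -> C = C'.
Proof.
case: C => H E; case: C' => H' E' HC HC' CC'.
have CC'1 M : fC S (H, E) M -> fC S (H', E') M by move/CC'.
have C'C1 M : fC S (H', E') M -> fC S (H, E) M by move/CC'.
congr pair; apply/fsetP => x; apply/idP/idP.
- exact: (clar_hexes_sub HC HC' CC'1).
- exact: (clar_hexes_sub HC' HC C'C1).
- exact: (clar_singles_sub HC' C'C1).
- exact: (clar_singles_sub HC CC'1).
Qed.

(** * Parity in the honeycomb and squares of R(H) *)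

Lemma cell_le_sum_abs (s : seq cell) d : d \in s -> (d.1 <= (\sum_(x <- s) absz x.1)%:Z)%R.
Proof.
have le_absz (a : int) (m : nat) : (a <= (absz a + m)%N)%R by lia.
have le_addl (a : int) (m k : nat) : (a <= m%:Z)%R -> (a <= (k + m)%N)%R by lia.
elim: s => [|x s IH] //; rewrite inE big_cons => /orP [/eqP -> | /IH].
  exact: le_absz.
exact: le_addl.
Qed.

(* A multiset of cells covering every edge an even number of times has even multiplicities:
   the edge (x+1, y, 2) lies only on the cells (x, y) and (x+1, y), so an odd cell would force
   odd cells arbitrarily far to the right. *)
Lemma even_cells_of_even_edges (s : seq cell) :
  (forall e, ~~ odd (count (fun c => e \in hex_edges c) s)) ->
  forall c, ~~ odd (count_mem c s).
Proof.
move=> even_edges c; apply/negP => odd_c.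
have step d : odd (count_mem d s) -> odd (count_mem ((d.1 + 1)%R, d.2) s).
  case: d => x y /= odd_d; have := even_edges (mke (x + 1)%R y 2).
  have ne : (x, y) != ((x + 1)%R, y) by rewrite xpair_eqE; lia.
  have -> : count (fun c => mke (x + 1)%R y 2 \in hex_edges c) s =
            count (predU (pred1 (x, y)) (pred1 ((x + 1)%R, y))) s.
    by apply: eq_count => c'; rewrite mem_hex_edges /mke inord3_2 /= addrK.
  rewrite -[count (predU _ _) s]addn0.
  have <- : count (predI (pred1 (x, y)) (pred1 ((x + 1)%R, y))) s = 0%N.
    apply/eqP; rewrite -leqn0 leqNgt -has_count; apply/hasP => -[c' _ /andP [/eqP -> /eqP E]].
    by rewrite E eqxx in ne.
  by rewrite count_predUI oddD odd_d /=; case: (odd _).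
have odd_right k : odd (count_mem ((c.1 + k%:Z)%R, c.2) s).
  elim: k => [|k IH]; first by rewrite addr0 -surjective_pairing.
  by have := step _ IH => /=; rewrite -addrA -PoszD addn1.
set B := (\sum_(x <- s) absz x.1)%N.
have := odd_right (absz B + absz c.1).+1 => /odd_gt0; rewrite -has_count => /hasP [d ds /eqP Ed].
by have := cell_le_sum_abs ds; rewrite Ed /= -/B; lia.
Qed.

(* In a 4-cycle M, Mi, Mij, Mj of R(H), opposite sides are labelled by the same hexagon,
   since the four labels cover every edge an even number of times. *)
Lemma res_square M Mi Mj Mij p q r s :
  symdiff M Mi = hex_edges p -> symdiff M Mj = hex_edges q ->
  symdiff Mi Mij = hex_edges r -> symdiff Mj Mij = hex_edges s ->
  Mi != Mj -> M != Mij -> s = p /\ r = q.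
Proof.
move=> Hp Hq Hr Hs ij MMij.
have pq : p != q.
  by apply: contra_neq ij => pq; subst q; rewrite -Hq in Hp; exact: symdiff_inj Hp.
have pr : p != r.
  by apply: contra_neq MMij => pr; subst r; rewrite -Hr symdiffC in Hp; exact: symdiff_inj Hp.
have even := @even_cells_of_even_edges [:: p; r; q; s].
have {}even c : ~~ odd (count_mem c [:: p; r; q; s]).
  apply: even => e /=; rewrite -Hp -Hq -Hr -Hs !in_symdiff addn0.
  by case: (e \in M); case: (e \in Mi); case: (e \in Mj); case: (e \in Mij).
have := even p; rewrite /= eqxx (eq_sym r) (negbTE pr) (eq_sym q) (negbTE pq) /= addn0.
have [sp _ | //] := eqVneq s p; subst s; split => //.
have := even r; rewrite /= eqxx (negbTE pr) /=.
by have [-> | //] := eqVneq q r.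
Qed.

Lemma finset_ind (T : finType) (P : {set T} -> Prop) :
  P set0 -> (forall x (A : {set T}), x \notin A -> P A -> P (x |: A)) -> forall A, P A.
Proof.
move=> P0 PU A; elim: {A}#|A| {-2}A (eqxx #|A|) => [|k IH] A /eqP Ak.
  by move/cards0_eq: Ak => ->.
have [x xA] : exists x, x \in A by apply/set0Pn; rewrite -card_gt0 Ak.
rewrite -(setD1K xA); apply: PU; first by rewrite !inE eqxx.
by apply: IH; rewrite (cardsD1 x A) xA add1n in Ak; case: Ak => ->.
Qed.

(** * From an induced cube of R(H) to a Clar cover *)

Section CubeToClar.
Variables (S : {fset cell}) (n : nat) (X : {fset edge} -> Prop).
Variable phi : {fset edge} -> {set 'I_n}.
Hypothesis X_perfect : forall M, X M -> perfect_matching S M.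
Hypothesis phi_inj : forall M M', X M -> X M' -> phi M = phi M' -> M = M'.
Hypothesis phi_surj : forall A, exists2 M, X M & phi M = A.
Hypothesis phi_adj : forall M M', X M -> X M' ->
  (res_adj S M M' <-> #|(phi M :\: phi M') :|: (phi M' :\: phi M)| = 1%N).

Lemma cube_vertex_ex A : exists M, X M /\ phi M = A.
Proof. by have [M XM phiM] := phi_surj A; exists M. Qed.

Definition cube_pm (A : {set 'I_n}) : {fset edge} :=
  proj1_sig (constructive_indefinite_description _ (cube_vertex_ex A)).

Lemma cube_pmP A : X (cube_pm A) /\ phi (cube_pm A) = A.
Proof. exact: proj2_sig (constructive_indefinite_description _ (cube_vertex_ex A)). Qed.

Lemma cube_pm_perfect A : perfect_matching S (cube_pm A).
Proof. exact/X_perfect/(cube_pmP A).1. Qed.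

Lemma cube_pm_inj : injective cube_pm.
Proof. by move=> A B E; rewrite -(cube_pmP A).2 E (cube_pmP B).2. Qed.

Lemma cube_pm_step (A : {set 'I_n}) i : i \notin A ->
  exists c, c \in S /\ symdiff (cube_pm A) (cube_pm (i |: A)) = hex_edges c.
Proof.
move=> iA; have [XA phiA] := cube_pmP A; have [XiA phiiA] := cube_pmP (i |: A).
have [c cS Hc] : res_adj S (cube_pm A) (cube_pm (i |: A)).
  apply/(phi_adj XA XiA); rewrite phiA phiiA; apply/eqP/cards1P; exists i; apply/setP => j.
  by rewrite !inE; have [-> | ] := eqVneq j i; [rewrite (negbTE iA) | case: (j \in A)].
by exists c; exact (conj cS Hc).
Qed.

(* The hexagon along which the cube moves in direction i, read off at the bottom vertex. *)
Definition cube_hex (i : 'I_n) : cell :=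
  proj1_sig (constructive_indefinite_description _ (cube_pm_step (negbT (in_set0 i)))).

Lemma cube_hexP i : cube_hex i \in S /\
  symdiff (cube_pm set0) (cube_pm (i |: set0)) = hex_edges (cube_hex i).
Proof.
exact: proj2_sig (constructive_indefinite_description _ (cube_pm_step (negbT (in_set0 i)))).
Qed.

(* Every move in direction i flips the same hexagon: induct on A, closing squares by res_square. *)
Lemma cube_step_hex (A : {set 'I_n}) i : i \notin A ->
  symdiff (cube_pm A) (cube_pm (i |: A)) = hex_edges (cube_hex i).
Proof.
move: i; elim/finset_ind: A => [i _ | j B jB IH i iB]; first exact: (cube_hexP i).2.
have ij : i != j by apply: contraNneq iB => ->; rewrite !inE eqxx.
have iB' : i \notin B by apply: contra iB => iB'; rewrite !inE iB' orbT.
have jiB : j \notin i |: B by rewrite !inE negb_or eq_sym ij jB.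
have [r [_ Hr]] := cube_pm_step jiB; rewrite setUCA in Hr.
have [s [_ Hs]] := cube_pm_step iB.
have neq_ij : cube_pm (i |: B) != cube_pm (j |: B).
  by apply/eqP => /cube_pm_inj /setP /(_ i); rewrite !inE eqxx (negbTE ij) (negbTE iB').
have neq_diag : cube_pm B != cube_pm (i |: (j |: B)).
  by apply/eqP => /cube_pm_inj /setP /(_ i); rewrite !inE eqxx (negbTE iB').
have [Es _] := res_square (IH i iB') (IH j jB) Hr Hs neq_ij neq_diag.
by rewrite Hs Es.
Qed.

Lemma cube_hex_alternates i : alternates (cube_pm set0) (cube_hex i).
Proof.
have [cS Hc] := cube_hexP i.
exact: symdiff_hex_alternates (cube_pm_perfect _) (cube_pm_perfect _) cS Hc.
Qed.

Lemma cube_hex_neq i j : i != j -> cube_hex i != cube_hex j.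
Proof.
move=> ij; apply/eqP => cij; have := (cube_hexP i).2; rewrite cij -(cube_hexP j).2.
by move/symdiff_inj/cube_pm_inj/setP/(_ i); rewrite !inE eqxx (negbTE ij).
Qed.

Lemma cube_hex_inj : injective cube_hex.
Proof. by move=> i j; apply: contra_eq; exact: cube_hex_neq. Qed.

(* The bottom matching cube_pm set0 covers v by one edge m lying on both hexagons; after
   flipping c_i, the edge covering v on c_j lies on c_i as well, hence equals m, which is
   no longer there. *)
Lemma cube_hexes_disjoint i j v : i != j ->
  v \in hex_verts (cube_hex i) -> v \notin hex_verts (cube_hex j).
Proof.
move=> ij vi; apply/negP => vj; have [ciS Hi] := cube_hexP i.
have vS : vertex_of S v := vertex_of_hex ciS vi.
have [cjS Hj] : cube_hex j \in S /\ symdiff (cube_pm (i |: set0)) (cube_pm (j |: (i |: set0)))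
                                    = hex_edges (cube_hex j).
  by split; [exact: (cube_hexP j).1 | apply: cube_step_hex; rewrite !inE eq_sym (negbTE ij)].
have altMi := symdiff_hex_alternates (cube_pm_perfect _) (cube_pm_perfect _) cjS Hj.
have [m [mM0 mi vm]] := alternates_covers (cube_hex_alternates i) vi.
have [m' [m'M0 m'j vm']] := alternates_covers (cube_hex_alternates j) vj.
have mm' : m = m' := perfect_matching_uniq (cube_pm_perfect _) vS vm vm' mM0 m'M0; subst m'.
have mMi : m \notin cube_pm (i |: set0).
  by have := mi; rewrite -Hi in_symdiff mM0; case: (_ \in cube_pm _).
have [f [fMi fj vf]] := alternates_covers altMi vj.
have fi : f \in hex_edges (cube_hex i).
  apply: contraT => fi; have fM0 : f \in cube_pm set0.
    by move: fi; rewrite -Hi in_symdiff fMi; case: (_ \in cube_pm set0).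
  have fm := perfect_matching_uniq (cube_pm_perfect _) vS vf vm fM0 mM0; subst f.
  by rewrite fMi in mMi.
have fm := hex_edges_meet_uniq (cube_hex_neq ij) mi m'j fi fj; subst f.
by rewrite fMi in mMi.
Qed.

Lemma cube_hex_edges_disjoint i j e : i != j ->
  e \in hex_edges (cube_hex i) -> e \notin hex_edges (cube_hex j).
Proof.
move=> ij ei; apply/negP => ej; have ve : incident (edge_black e) e by left.
by case/negP: (cube_hexes_disjoint ij (incident_hex_verts ve ei)); apply: incident_hex_verts ej.
Qed.

Definition cube_clar : {fset cell} * {fset edge} :=
  ([fset cube_hex i | i : 'I_n],
   cube_pm set0 `\` \bigcup_(i <- enum 'I_n) hex_edges (cube_hex i)).

Lemma mem_cube_singles e :
  (e \in cube_clar.2) = (e \in cube_pm set0) && [forall i, e \notin hex_edges (cube_hex i)].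
Proof.
rewrite inE andbC; congr (_ && _); apply/idP/forallP => [off i | off].
  by apply: contra off => ei; apply/bigfcupP; exists i; rewrite ?mem_enum.
by apply/negP => /bigfcupP [i _ ei]; have := off i; rewrite ei.
Qed.

Lemma mem_cube_hexes d : d \in cube_clar.1 <-> exists i, d = cube_hex i.
Proof.
split; first by case/imfsetP => i _ ->; exists i.
by case=> i ->; apply/imfsetP; exists i.
Qed.

(* Walking from the bottom of the cube to A flips exactly the hexagons c_i with i in A. *)
Lemma cube_pm_shape A :
  (forall i, alternates (cube_pm A) (cube_hex i) /\
     hex_bit (cube_pm A) (cube_hex i) = hex_bit (cube_pm set0) (cube_hex i) (+) (i \in A)) /\
  {subset cube_clar.2 <= cube_pm A}.
Proof.
elim/finset_ind: A => [|j B jB [IH1 IH2]].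
  split; last by move=> e; rewrite mem_cube_singles => /andP [].
  by move=> i; split; [exact: cube_hex_alternates | rewrite inE addbF].
have Hj := cube_step_hex jB.
have same e : e \notin hex_edges (cube_hex j) -> (e \in cube_pm (j |: B)) = (e \in cube_pm B).
  by rewrite -Hj in_symdiff; case: (e \in cube_pm B); case: (e \in cube_pm _).
split=> [i | e eC]; last first.
  by rewrite same ?IH2 //; move: eC; rewrite mem_cube_singles => /andP [_ /forallP].
have [-> | ij] := eqVneq i j.
  split; first exact: symdiff_hex_alternates (cube_pm_perfect _) (cube_pm_perfect B)
                        (cube_hexP j).1 (etrans (symdiffC _ _) Hj).
  have := hex_edge_mem (cube_hex j) (isT : 0 < 6)%N.
  rewrite -Hj in_symdiff -/(hex_bit (cube_pm B) _) -/(hex_bit (cube_pm (j |: B)) _).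
  rewrite (proj2 (IH1 j)) !inE eqxx (negbTE jB) /= addbF.
  by case: (hex_bit (cube_pm set0) _); case: (hex_bit _ _).
have [A1 A2] := IH1 i; split.
  by apply: alternates_eq A1 _ => e ei; rewrite same //; exact: cube_hex_edges_disjoint ij ei.
rewrite /hex_bit same ?(cube_hex_edges_disjoint ij (hex_edge_mem _ _)) //.
by rewrite -/(hex_bit (cube_pm B) _) A2 !inE (negbTE ij).
Qed.

Lemma cube_clar_cover : clar_cover S cube_clar.
Proof.
split; first by move=> d /mem_cube_hexes [i ->]; exact: (cube_hexP i).1.
split.
  by move=> e; rewrite mem_cube_singles => /andP [eM _]; exact: (cube_pm_perfect _).1 _ eM.
move=> v vS; have [/existsP [i vi] | ] := boolP [exists i, v \in hex_verts (cube_hex i)].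
  left; split.
    exists (cube_hex i); split; first by split => //; apply/mem_cube_hexes; exists i.
    move=> d [/mem_cube_hexes [j ->] vj]; have [-> // | ji] := eqVneq j i.
    by case/negP: (cube_hexes_disjoint ji vj).
  move=> e; rewrite mem_cube_singles => /andP [eM /forallP /(_ i) ei] ve.
  have [f [fM fi vf]] := alternates_covers (cube_hex_alternates i) vi.
  have ef := perfect_matching_uniq (cube_pm_perfect _) vS ve vf eM fM; subst f.
  by rewrite fi in ei.
rewrite negb_exists => /forallP off; right; split; first by move=> d /mem_cube_hexes [i ->].
have [e [[eM ve] Hu]] := (cube_pm_perfect set0).2 v vS.
exists e; split.
  split => //; rewrite mem_cube_singles eM; apply/forallP => i; apply/negP => ei.
  by have := off i; rewrite (incident_hex_verts ve ei).
by move=> f [fC vf]; apply: Hu; split => //; move: fC; rewrite mem_cube_singles => /andP [].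
Qed.

Lemma cube_clar_card : #|` cube_clar.1| = n.
Proof. by rewrite card_imfset /= ?size_enum_ord //; exact: cube_hex_inj. Qed.

Lemma cube_fC M : X M <-> fC S cube_clar M.
Proof.
have X_fC M' : X M' -> fC S cube_clar M'.
  move=> XM'; have <- : cube_pm (phi M') = M'.
    by apply: phi_inj => //; [exact: (cube_pmP _).1 | exact: (cube_pmP _).2].
  have [shape C2M] := cube_pm_shape (phi M'); split; [exact: cube_pm_perfect | | exact: C2M].
  by move=> d /mem_cube_hexes [i ->]; apply/alternatingP; exact: (shape i).1.
split; first exact: X_fC.
move=> fM; pose A := [set i | hex_bit M (cube_hex i) != hex_bit (cube_pm set0) (cube_hex i)].
suff <- : cube_pm A = M by exact: (cube_pmP A).1.
apply: (fC_eq cube_clar_cover (X_fC _ (cube_pmP A).1) fM) => _ /mem_cube_hexes [i ->].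
rewrite ((cube_pm_shape A).1 i).2 !inE.
by case: (hex_bit M _); case: (hex_bit _ _).
Qed.

End CubeToClar.

Theorem corollary1 (S : {fset cell}) :
  hexagonal_system S -> kekulean S ->
  forall n : nat,
    (* f maps Clar covers with n hexagons to induced Q_n's *)
    (forall C, clar_cover S C -> #|` C.1| = n -> induces_cube S n (fC S C)) /\
    (* f is injective *)
    (forall C1 C2, clar_cover S C1 -> #|` C1.1| = n ->
                   clar_cover S C2 -> #|` C2.1| = n ->
                   (forall M, fC S C1 M <-> fC S C2 M) -> C1 = C2) /\
    (* f is surjective *)
    (forall X : {fset edge} -> Prop, induces_cube S n X ->
       exists2 C, clar_cover S C /\ #|` C.1| = n & forall M, X M <-> fC S C M).
Proof.
move=> _ _ n; split; [|split].
- by move=> C HC C_card; exact: fC_induces_cube HC C_card.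
- by move=> C C' HC _ HC' _; apply: fC_inj.
- move=> X [X_perfect [phi [phi_inj phi_surj phi_adj]]].
  exists (cube_clar phi_surj phi_adj).
    by split; [exact: cube_clar_cover | exact: cube_clar_card].
  exact: cube_fC.
Qed.
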